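(* The functors $\varepsilon_C:Sd(C)\to C$ are natural in $C$: for every functor $f:C\to D$ between small categories, $f\circ\varepsilon_C=\varepsilon_D\circ Sd(f)$. Hence they form a natural transformation $\varepsilon:Sd\Rightarrow\mathrm{id}_{\mathcal{Cat}}$.
   Context: For a small category $C$: a $q$-simplex of the nerve $NC$ is a functor $X:[q]\to C$ ($[q]=\{0<\dots<q\}$), i.e. a chain of arrows $f_i:X_{i-1}\to X_i$; $q_X=q$; for $i\le j$, $X(i\to j)$ denotes the composite $X_i\to X_j$. $X$ is non-degenerate if no $f_i$ is an identity. $\Delta/C$ has all simplices as objects and as morphisms $X\to Y$ the order-preserving $\xi:[q_X]\to[q_Y]$ with $Y\circ\xi=X$, written $\xi_*$. For a $q$-simplex $X$ and surjective order-preserving $s:[q+1]\to[q]$ with order-preserving right inverses $d,d'$, $d_*,d'_*:X\to X\circ s$ are elementary equivalent; $\sim$ is the smallest equivalence relation on morphisms of $\Delta/C$ compatible with composition containing these pairs; $[\Delta/C]$ is the quotient category; $Sd(C)$ is its full subcategory on the non-degenerate simplices. $\varepsilon_C:Sd(C)\to C$ sends $X$ to $X_{q_X}$ and $[\xi_*]:X\to Y$ to $Y(\xi(q_X)\to q_Y)$. For a simplex $X=(f_1,\dots,f_q)$, $r(X)$ is the non-degenerate simplex obtained by deleting identity arrows, of dimension $p_X$, and $\alpha_X:[q_X]\to[p_X]$ is the surjective order-preserving map with $\alpha_X(i-1)=\alpha_X(i)$ iff $f_i$ is an identity, so $X=r(X)\circ\alpha_X$. For a functor $f:C\to D$, the functor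 $Sd(f):Sd(C)\to Sd(D)$ sends $X$ to $r(f\circ X)$ and $[\xi_*]:X\to Y$ to $[(\alpha_{f\circ Y}\circ\xi\circ\sigma)_*]$, where $\sigma$ is any order-preserving right inverse of $\alpha_{f\circ X}$. *)

From Stdlib Require Import Arith ClassicalDescription.

Set Implicit Arguments.
Set Universe Polymorphism.

(* A (small) category; composition written diagrammatically:
   comp u v : Hom a c  for u : Hom a b, v : Hom b c  ("v after u"). *)
Record Category := {
  Ob : Type;
  Hom : Ob -> Ob -> Type;
  idm : forall a, Hom a a;
  comp : forall a b c, Hom a b -> Hom b c -> Hom a c;
  comp_id_l : forall a b (u : Hom a b), comp (idm a) u = u;
  comp_id_r : forall a b (u : Hom a b), comp u (idm b) = u;
  comp_assoc : forall a b c d (u : Hom a b) (v : Hom b c) (w : Hom c d),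
      comp (comp u v) w = comp u (comp v w)
}.

Arguments idm {C} a : rename.
Arguments comp {C a b c} _ _ : rename.

Record Functor (C D : Category) := {
  Fob : Ob C -> Ob D;
  Fmap : forall a b, Hom C a b -> Hom D (Fob a) (Fob b);
  Fmap_id : forall a, Fmap a a (@idm C a) = @idm D (Fob a);
  Fmap_comp : forall a b c (u : Hom C a b) (v : Hom C b c),
      Fmap a c (@comp C a b c u v) = @comp D _ _ _ (Fmap a b u) (Fmap b c v)
}.

Arguments Fob {C D} f _.
Arguments Fmap {C D} f {a b} _.

Definition Arr (C : Category) := {a : Ob C & {b : Ob C & Hom C a b}}.
Definition pack (C : Category) (a b : Ob C) (u : Hom C a b) : Arr C :=
  existT _ a (existT _ b u).
Arguments pack {C a b} u.

Definition dom (C : Category) (g : Arr C) : Ob C := projT1 g.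

Definition is_id (C : Category) (g : Arr C) : Prop :=
  exists a : Ob C, g = pack (idm a).

Definition is_comp (C : Category) (g h k : Arr C) : Prop :=
  exists (a b c : Ob C) (u : Hom C a b) (v : Hom C b c),
    g = pack u /\ h = pack v /\ k = pack (comp u v).

Definition FmapA (C D : Category) (f : Functor C D) (g : Arr C) : Arr D :=
  pack (Fmap f (projT2 (projT2 g))).

(* A simplex X : [q] -> C of the nerve: its dimension q and, for i <= j <= q,
   the arrow X(i -> j) : X_i -> X_j (values outside the range are junk).
   [valid X] says that this data is a functor [q] -> C. *)
Record simplex (C : Category) := Simplex {
  sdim : nat;
  sarr : nat -> nat -> Arr C
}.

Arguments Simplex {C} _ _.

Definition valid (C : Category) (X : simplex C) : Prop :=
  (forall i, i <= sdim X -> exists a, sarr X i i = pack (idm a)) /\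
  (forall i j k, i <= j -> j <= k -> k <= sdim X ->
     is_comp (sarr X i j) (sarr X j k) (sarr X i k)).

Definition sob (C : Category) (X : simplex C) (i : nat) : Ob C :=
  dom (sarr X i i).

Definition nondeg (C : Category) (X : simplex C) : Prop :=
  forall i, 1 <= i <= sdim X -> ~ is_id (sarr X (i - 1) i).

Definition is_idb (C : Category) (g : Arr C) : bool :=
  if excluded_middle_informative (is_id g) then true else false.

Fixpoint alpha (C : Category) (X : simplex C) (i : nat) : nat :=
  match i with
  | 0 => 0
  | S m => alpha X m + (if is_idb (sarr X m (S m)) then 0 else 1)
  end.

Definition pdim (C : Category) (X : simplex C) : nat := alpha X (sdim X).

Fixpoint first_from (P : nat -> bool) (i fuel : nat) : nat :=
  match fuel with
  | 0 => i
  | S m => if P i then i else first_from P (S i) m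
  end.

(* least i <= q with alpha_X i = k (a section of alpha_X) *)
Definition rsec (C : Category) (X : simplex C) (k : nat) : nat :=
  first_from (fun i => Nat.eqb (alpha X i) k) 0 (S (sdim X)).

(* r(X): delete the identity arrows, so that X = r(X) o alpha_X. *)
Definition rsimp (C : Category) (X : simplex C) : simplex C :=
  Simplex (pdim X) (fun k l => sarr X (rsec X k) (rsec X l)).

Definition fimg (C D : Category) (f : Functor C D) (X : simplex C) : simplex D :=
  Simplex (sdim X) (fun i j => FmapA f (sarr X i j)).

(* xi_* : X -> Y is a morphism of Delta/C *)
Definition dmor (C : Category) (X Y : simplex C) (xi : nat -> nat) : Prop :=
  (forall i, i <= sdim X -> xi i <= sdim Y) /\
  (forall i j, i <= j -> j <= sdim X -> xi i <= xi j) /\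
  (forall i j, i <= j -> j <= sdim X -> sarr Y (xi i) (xi j) = sarr X i j).

Definition alpha_section (C : Category) (X : simplex C) (sigma : nat -> nat) : Prop :=
  (forall k, k <= pdim X -> sigma k <= sdim X /\ alpha X (sigma k) = k) /\
  (forall k l, k <= l -> l <= pdim X -> sigma k <= sigma l).

Definition eps_ob (C : Category) (X : simplex C) : Ob C := sob X (sdim X).
Definition eps_mor (C : Category) (X Y : simplex C) (xi : nat -> nat) : Arr C :=
  sarr Y (xi (sdim X)) (sdim Y).

Definition Sd_ob (C D : Category) (f : Functor C D) (X : simplex C) : simplex D :=
  rsimp (fimg f X).
Definition Sd_mor (C D : Category) (f : Functor C D) (Y : simplex C)
  (xi sigma : nat -> nat) : nat -> nat :=
  fun k => alpha (fimg f Y) (xi (sigma k)).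

(* Both functors are computed from representatives, so naturality reduces to
   the identity X = r(X) o alpha_X applied to the simplex f o X of D: the last
   vertex of r(f o X) is that of f o X, and r(f o Y)(alpha k -> alpha l) is
   (f o Y)(k -> l).  For a morphism xi_* : X -> Y and a section sigma of
   alpha_{f o X}, the vertex s = sigma(p) satisfies alpha(s) = alpha(q), so
   (f o X)(s -> q) = (f o Y)(xi s -> xi q) is an identity and the arrow
   (f o Y)(xi s -> q_Y) chosen by Sd(f) equals f(Y(xi q -> q_Y)). *)
From Stdlib Require Import Arith Lia Eqdep ClassicalDescription.
Set Implicit Arguments.

Section Arrows.
Variable E : Category.

Lemma pack_comp_id_l (a b c : Ob E) (u : Hom E a b) (v : Hom E b c) :
  is_id (pack u) -> pack (comp u v) = pack v.
Proof.
intros [x H]; unfold pack in H; inversion H as [[Ha Hb]]; subst.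
apply inj_pair2, inj_pair2 in H; subst.
now rewrite comp_id_l.
Qed.

Lemma pack_comp_id_r (a b c : Ob E) (u : Hom E a b) (v : Hom E b c) :
  is_id (pack v) -> pack (comp u v) = pack u.
Proof.
intros [x H]; unfold pack in H; inversion H as [[Hb Hc]]; subst.
apply inj_pair2, inj_pair2 in H; subst.
now rewrite comp_id_r.
Qed.

Lemma is_comp_id_l (g h k : Arr E) : is_comp g h k -> is_id g -> k = h.
Proof. intros (a & b & c & u & v & -> & -> & ->); apply pack_comp_id_l. Qed.

Lemma is_comp_id_r (g h k : Arr E) : is_comp g h k -> is_id h -> k = g.
Proof. intros (a & b & c & u & v & -> & -> & ->); apply pack_comp_id_r. Qed.

Lemma is_comp_dom (g h k : Arr E) : is_comp g h k -> dom k = dom g.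
Proof. now intros (a & b & c & u & v & -> & -> & ->). Qed.

Lemma is_comp_is_id (g h k : Arr E) : is_comp g h k -> is_id g -> is_id h -> is_id k.
Proof. intros Hc Hg Hh; now rewrite (is_comp_id_l Hc Hg). Qed.

End Arrows.

Lemma valid_fimg (C D : Category) (f : Functor C D) (X : simplex C) :
  valid X -> valid (fimg f X).
Proof.
intros [Hid Hcomp]; split; simpl.
- intros i Hi; destruct (Hid i Hi) as [a Ha]; exists (Fob f a).
  unfold FmapA; rewrite Ha; simpl; now rewrite Fmap_id.
- intros i j k Hij Hjk Hk.
  destruct (Hcomp i j k Hij Hjk Hk) as (a & b & c & u & v & -> & -> & ->).
  exists (Fob f a), (Fob f b), (Fob f c), (Fmap f u), (Fmap f v).
  unfold FmapA; simpl; now rewrite Fmap_comp.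
Qed.

Lemma alpha_mono (E : Category) (W : simplex E) i j : i <= j -> alpha W i <= alpha W j.
Proof. induction 1; simpl; lia. Qed.

Lemma first_from_spec (P : nat -> bool) fuel i m :
  i <= m -> m < i + fuel -> P m = true ->
  P (first_from P i fuel) = true /\ first_from P i fuel <= m.
Proof.
revert i; induction fuel as [|fuel IH]; intros i Him Hfuel Pm; [lia|].
simpl; destruct (P i) eqn:Pi; [split; [exact Pi | exact Him]|].
assert (i <> m) by (intros ->; congruence).
apply IH; lia || exact Pm.
Qed.

Section ValidSimplex.
Variables (E : Category) (W : simplex E).
Hypothesis HW : valid W.

Lemma sarr_id_l i j k : i <= j -> j <= k -> k <= sdim W ->
  is_id (sarr W i j) -> sarr W i k = sarr W j k.
Proof. intros Hij Hjk Hk; exact (is_comp_id_l (proj2 HW i j k Hij Hjk Hk)). Qed.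

Lemma sarr_id_r i j k : i <= j -> j <= k -> k <= sdim W ->
  is_id (sarr W j k) -> sarr W i k = sarr W i j.
Proof. intros Hij Hjk Hk; exact (is_comp_id_r (proj2 HW i j k Hij Hjk Hk)). Qed.

Lemma dom_sarr i k : i <= k -> k <= sdim W -> dom (sarr W i k) = sob W i.
Proof. intros Hik Hk; exact (is_comp_dom (proj2 HW i i k (le_n i) Hik Hk)). Qed.

Lemma alpha_eq_is_id i j : i <= j -> j <= sdim W ->
  alpha W i = alpha W j -> is_id (sarr W i j).
Proof.
induction 1 as [|j Hij IH]; intros Hj Hal.
- destruct (proj1 HW i Hj) as [a Ha]; now exists a.
- simpl in Hal; pose proof (alpha_mono W Hij) as Hmono.
  apply (is_comp_is_id (proj2 HW i j (S j) Hij (le_S _ _ (le_n j)) Hj)).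
  + apply IH; lia.
  + unfold is_idb in Hal; destruct excluded_middle_informative; [assumption | lia].
Qed.

Lemma rsec_alpha m : m <= sdim W ->
  rsec W (alpha W m) <= m /\ alpha W (rsec W (alpha W m)) = alpha W m.
Proof.
intros Hm; unfold rsec.
destruct (@first_from_spec (fun i => Nat.eqb (alpha W i) (alpha W m)) (S (sdim W)) 0 m)
  as [Hal Hle]; try lia; [apply Nat.eqb_refl|].
split; [exact Hle | now apply Nat.eqb_eq].
Qed.

Lemma rsec_alpha_mono m m' : m <= m' -> m' <= sdim W ->
  rsec W (alpha W m) <= rsec W (alpha W m').
Proof.
intros Hmm' Hm'.
destruct (rsec_alpha (m := m) ltac:(lia)) as [_ Hal].
destruct (rsec_alpha Hm') as [_ Hal'].
destruct (Nat.le_gt_cases (rsec W (alpha W m)) (rsec W (alpha W m'))) as [|Hgt]; [assumption|].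
pose proof (alpha_mono W Hmm'); pose proof (alpha_mono W (Nat.lt_le_incl _ _ Hgt)).
replace (alpha W m) with (alpha W m') by lia; lia.
Qed.

Lemma sarr_rsec_l m k : m <= k -> k <= sdim W ->
  sarr W (rsec W (alpha W m)) k = sarr W m k.
Proof.
intros Hmk Hk; destruct (rsec_alpha (m := m) ltac:(lia)) as [Hle Hal].
apply sarr_id_l; try lia; apply alpha_eq_is_id; lia.
Qed.

Lemma sarr_rsec_r i k : i <= rsec W (alpha W k) -> k <= sdim W ->
  sarr W i (rsec W (alpha W k)) = sarr W i k.
Proof.
intros Hi Hk; destruct (rsec_alpha Hk) as [Hle Hal].
symmetry; apply sarr_id_r; try lia; apply alpha_eq_is_id; lia.
Qed.

Lemma rsimp_alpha i k : i <= k -> k <= sdim W ->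
  sarr (rsimp W) (alpha W i) (alpha W k) = sarr W i k.
Proof.
intros Hik Hk; simpl.
rewrite sarr_rsec_r; [now apply sarr_rsec_l | apply rsec_alpha_mono | ]; lia.
Qed.

Lemma sob_rsimp_alpha m : m <= sdim W -> sob (rsimp W) (alpha W m) = sob W m.
Proof.
intros Hm; unfold sob; rewrite (rsimp_alpha (le_n m) Hm).
now apply dom_sarr.
Qed.

End ValidSimplex.

Theorem lemma26 (C D : Category) (f : Functor C D) :
  (forall X : simplex C, valid X -> nondeg X ->
     Fob f (eps_ob X) = eps_ob (Sd_ob f X)) /\
  (forall (X Y : simplex C) (xi sigma : nat -> nat),
     valid X -> valid Y -> nondeg X -> nondeg Y ->
     dmor X Y xi ->
     alpha_section (fimg f X) sigma ->
     FmapA f (eps_mor X Y xi) =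
       eps_mor (Sd_ob f X) (Sd_ob f Y) (Sd_mor f Y xi sigma)).
Proof.
split.
- intros X HX _.
  change (sob (fimg f X) (sdim X) = sob (rsimp (fimg f X)) (alpha (fimg f X) (sdim X))).
  rewrite sob_rsimp_alpha; [reflexivity | now apply valid_fimg | apply le_n].
- intros X Y xi sigma HX HY _ _ [Hxi_le [Hxi_mono Hxi_arr]] [Hsigma _].
  set (V := fimg f X); set (W := fimg f Y).
  assert (HV : valid V) by now apply valid_fimg.
  assert (HW : valid W) by now apply valid_fimg.
  destruct (Hsigma (pdim V) (le_n _)) as [Hs Has].
  set (s := sigma (pdim V)) in *; set (q := sdim X) in *.
  assert (Hsq : xi s <= xi q) by (apply Hxi_mono; auto).
  assert (Hq : xi q <= sdim W) by (apply Hxi_le, le_n).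
  assert (Hid : is_id (sarr W (xi s) (xi q))).
  { simpl; rewrite (Hxi_arr s q Hs (le_n q)).
    now apply (alpha_eq_is_id HV). }
  change (sarr W (xi q) (sdim W) =
          sarr (rsimp W) (alpha W (xi s)) (alpha W (sdim W))).
  rewrite (rsimp_alpha HW) by lia.
  symmetry; apply (sarr_id_l HW); auto.
Qed.
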